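(* Let $R$ be an almost Dedekind domain and $M\in\mathrm{Max}(R)$. Then $M$ is an isolated point of $\mathcal{M}$ if and only if $M$ is finitely generated.
   Context: $R$ almost Dedekind: $R_M$ is a DVR for every maximal $M$. $\mathcal{M}$ is $\mathrm{Max}(R)$ with the inverse topology, i.e. the restriction of the coarsest topology on $\mathrm{Spec}(R)$ in which every Zariski-open Zariski-compact subset is closed (on $\mathrm{Max}(R)$ it coincides with the constructible topology). *)

From HB Require Import structures.
From mathcomp Require Import all_boot all_order all_algebra.
From mathcomp Require Import fraction.
From mathcomp Require Import boolp classical_sets.
Set Implicit Arguments. Unset Strict Implicit. Unset Printing Implicit Defensive.
Import Order.TTheory GRing.Theory Num.Theory.
Local Open Scope classical_set_scope.
Local Open Scope ring_scope.

Section Defs.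
Variable R : idomainType.

Definition is_ideal (I : set R) : Prop :=
  I 0 /\ (forall x y, I x -> I y -> I (x + y)) /\ (forall a x, I x -> I (a * x)).

Definition prime_ideal (P : set R) : Prop :=
  is_ideal P /\ ~ P 1 /\ (forall x y, P (x * y) -> P x \/ P y).

Definition maximal_ideal (M : set R) : Prop :=
  is_ideal M /\ ~ M 1 /\
  (forall J : set R, is_ideal J -> M `<=` J -> J = M \/ J = setT).

Definition finitely_generated (I : set R) : Prop :=
  exists (n : nat) (a : 'I_n -> R),
    I = [set x | exists c : 'I_n -> R, x = \sum_(i < n) c i * a i].

Definition localization (M : set R) : set {fraction R} :=
  [set z | exists a s : R, ~ M s /\ z = FracField.tofrac a / FracField.tofrac s].

(* S is a DVR: the valuation ring of a discrete valuation v : K^* ->> Z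
   of the fraction field K (Atiyah-Macdonald, ch. 9). *)
Definition is_DVR (S : set {fraction R}) : Prop :=
  exists v : {fraction R} -> int,
    (forall x y, x != 0 -> y != 0 -> v (x * y) = v x + v y) /\
    (forall x y, x != 0 -> y != 0 -> x + y != 0 ->
        Order.min (v x) (v y) <= v (x + y)) /\
    (forall n : int, exists x, x != 0 /\ v x = n) /\
    S = [set x | x = 0 \/ (x != 0 /\ 0 <= v x)].

Definition almost_Dedekind : Prop :=
  forall M : set R, maximal_ideal M -> is_DVR (localization M).

Definition Spec : set (set R) := [set P | prime_ideal P].
Definition MaxSpec : set (set R) := [set M | maximal_ideal M].

Definition zariski_open (U : set (set R)) : Prop :=
  exists I : set R, U = [set P | prime_ideal P /\ ~ (I `<=` P)].

Definition zariski_compact (U : set (set R)) : Prop :=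
  forall C : set (set (set R)), (forall V, C V -> zariski_open V) ->
    U `<=` \bigcup_(V in C) V ->
    exists s : seq (set (set R)), (forall V, V \in s -> C V) /\
      U `<=` \bigcup_(V in [set V | V \in s]) V.

Definition is_topology_on_Spec (T : set (set (set R))) : Prop :=
  T Spec /\ (forall U, T U -> U `<=` Spec) /\
  (forall C : set (set (set R)), C `<=` T -> T (\bigcup_(U in C) U)) /\
  (forall U V, T U -> T V -> T (U `&` V)).

(* Inverse topology: the coarsest topology on Spec(R) in which every
   Zariski-open Zariski-compact subset is closed. *)
Definition inverse_open (U : set (set R)) : Prop :=
  forall T, is_topology_on_Spec T ->
    (forall K, zariski_open K -> zariski_compact K -> T (Spec `\` K)) -> T U.

Definition isolated_in_inverse_Max (M : set R) : Prop :=
  exists U, inverse_open U /\ U `&` MaxSpec = [set M].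

End Defs.

(* In the inverse topology the open sets are unions of zero loci V(s) of finite
   sets s, so M is isolated in Max(R) iff V(s) meets Max(R) only in M for some
   finite s contained in M. If M = (a_1, ..., a_n), then V(M) is the complement
   of the quasi-compact open D(M) and meets Max(R) only in M. Conversely, given
   such an s and a generator t of the maximal ideal of the DVR R_M, the ideal
   (t, s) agrees with M locally at every maximal ideal, hence equals M. *)
From mathcomp Require Import all_boot all_order all_algebra.
From mathcomp Require Import fraction boolp classical_sets ring zify.
Set Implicit Arguments. Unset Strict Implicit. Unset Printing Implicit Defensive.
Import Order.TTheory GRing.Theory Num.Theory.
Local Open Scope classical_set_scope.
Local Open Scope ring_scope.

Section Ideals.
Variable R : idomainType.
Implicit Types (a x y : R) (I J L P Q N : set R).

Lemma ideal0 I : is_ideal I -> I 0.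
Proof. by case. Qed.

Lemma idealD I x y : is_ideal I -> I x -> I y -> I (x + y).
Proof. by case=> _ [+ _]; apply. Qed.

Lemma idealMl I a x : is_ideal I -> I x -> I (a * x).
Proof. by case=> _ [_]; apply. Qed.

Lemma idealMr I x a : is_ideal I -> I x -> I (x * a).
Proof. by rewrite mulrC; apply: idealMl. Qed.

Lemma ideal_eqT I : is_ideal I -> I 1 -> I = setT.
Proof.
by move=> iI I1; apply/seteqP; split=> // x _; rewrite -(mulr1 x); apply: idealMl.
Qed.

Lemma prime_ideal_pow P a k : prime_ideal P -> P (a ^+ k) -> P a.
Proof.
move=> [_ [P1 Pmul]]; elim: k => [|k IHk]; first by rewrite expr0.
by rewrite exprS => /Pmul [].
Qed.

Lemma ideal_bigcup_chain (F : set (set R)) :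
  F !=set0 -> (forall I, F I -> is_ideal I) -> total_on F subset ->
  is_ideal (\bigcup_(I in F) I).
Proof.
move=> [I0 FI0] Fideal Fchain.
split; first by exists I0 => //; exact: ideal0 (Fideal _ FI0).
split=> [x y [I FI Ix] [J FJ Jy]|a x [I FI Ix]]; last first.
  by exists I => //; exact: idealMl _ (Fideal _ FI) Ix.
have [IJ|JI] := Fchain I J FI FJ.
- by exists J => //; apply: idealD (IJ _ Ix) Jy; apply: Fideal.
- by exists I => //; apply: idealD Ix (JI _ Jy); apply: Fideal.
Qed.

Definition avoids_powers a I := forall k, ~ I (a ^+ k).

Lemma ex_maximal_avoiding a L : is_ideal L -> avoids_powers a L ->
  exists P, [/\ is_ideal P, L `<=` P, avoids_powers a P &
    forall Q, is_ideal Q -> P `<=` Q -> avoids_powers a Q -> Q = P].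
Proof.
move=> iL aL; pose good Q := [/\ is_ideal Q, L `<=` Q & avoids_powers a Q].
(* The empty chain has union [set0], so [set0] is admitted as a member. *)
pose G := [set Q | Q = set0 \/ good Q].
have [P [GP Pmax]] : exists P, G P /\ forall Q, P `<` Q -> ~ G Q.
  apply: Zorn_bigcup => F FG Fchain.
  have [allF0|/existsNP[Q0 /not_implyP[FQ0 Q0n0]]] :=
    pselect (forall Q, F Q -> Q = set0).
    by left; apply/seteqP; split=> // x [Q /allF0 ->].
  have goodQ0 : good Q0 by case: (FG Q0 FQ0).
  have goodF Q x : F Q -> Q x -> good Q by move=> /FG[-> //|].
  have FgoodE : \bigcup_(Q in F) Q = \bigcup_(Q in F `&` good) Q.
    apply/seteqP; split=> x [Q FQ Qx]; exists Q => //; last by case: FQ.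
    by split=> //; apply: goodF Qx.
  have [iQ0 LQ0 _] := goodQ0.
  right; rewrite FgoodE; split.
  - apply: ideal_bigcup_chain => [|Q [_ []] //|Q Q' [FQ _] [FQ' _]].
      by exists Q0.
    exact: Fchain.
  - by move=> x /LQ0 Q0x; exists Q0.
  - by move=> k [Q [_ [_ _ aQ]]]; apply: aQ.
case: GP => [P0|[iP LP aP]].
  exfalso; apply: (Pmax L); last by right; split.
  by rewrite P0; split=> // /(_ 0) /(_ (ideal0 iL)).
exists P; split=> // Q iQ PQ aQ; apply: contrapT => QneP.
apply: (Pmax Q); last by right; split=> // x /LP /PQ.
by split=> // QP; apply: QneP; apply/seteqP; split.
Qed.

Definition adjoin I x := [set y | exists p r, I p /\ y = p + r * x].

Lemma adjoin_ideal I x : is_ideal I -> is_ideal (adjoin I x).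
Proof.
move=> iI; split; first by exists 0, 0; rewrite mul0r addr0; split=> //; apply: ideal0.
split=> [_ _ [p [r [Ip ->]]] [p' [r' [Ip' ->]]]|b _ [p [r [Ip ->]]]].
- by exists (p + p'), (r + r'); rewrite mulrDl addrACA; split=> //; apply: idealD.
- by exists (b * p), (b * r); rewrite mulrDr mulrA; split=> //; apply: idealMl.
Qed.

Lemma sub_adjoin I x : is_ideal I -> I `<=` adjoin I x.
Proof. by move=> iI p Ip; exists p, 0; rewrite mul0r addr0. Qed.

Lemma adjoin_mem I x : is_ideal I -> adjoin I x x.
Proof. by move=> iI; exists 0, 1; rewrite mul1r add0r; split=> //; apply: ideal0. Qed.


Lemma maximal_avoiding_prime a P : is_ideal P -> avoids_powers a P ->
  (forall Q, is_ideal Q -> P `<=` Q -> avoids_powers a Q -> Q = P) ->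
  prime_ideal P.
Proof.
move=> iP aP Pmax; split=> //; split; first by move: (aP 0%N); rewrite expr0.
move=> x y Pxy; apply: contrapT => /not_orP[Px Py].
have adjoin_pow z : ~ P z -> exists k, adjoin P z (a ^+ k).
  move=> Pz; apply: contrapT => /forallNP aPz; apply: Pz.
  by rewrite -(Pmax _ (adjoin_ideal z iP) (sub_adjoin z iP) aPz); apply: adjoin_mem.
have [i [p [r [Pp ei]]]] := adjoin_pow x Px.
have [j [p' [r' [Pp' ej]]]] := adjoin_pow y Py.
apply: (aP (i + j)%N); rewrite exprD ei ej.
have -> : (p + r * x) * (p' + r' * y) =
    p * (p' + r' * y) + (p' * (r * x) + (r * r') * (x * y)) by ring.
by apply: idealD => //; [|apply: idealD => //]; [apply: idealMr..|apply: idealMl].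
Qed.

Lemma ex_prime_avoiding a L : is_ideal L -> avoids_powers a L ->
  exists P, [/\ prime_ideal P, L `<=` P & avoids_powers a P].
Proof.
move=> iL aL; have [P [iP LP aP Pmax]] := ex_maximal_avoiding iL aL.
by exists P; split=> //; apply: maximal_avoiding_prime Pmax.
Qed.

Lemma avoids_powers1 I : avoids_powers 1 I <-> ~ I 1.
Proof. by split=> [/(_ 0%N)|I1 k]; rewrite expr1n. Qed.

Lemma maximal_ideal_prime N : maximal_ideal N -> prime_ideal N.
Proof.
move=> [iN [N1 Nmax]]; apply: (@maximal_avoiding_prime 1) => // [|Q iQ NQ].
  exact/avoids_powers1.
move=> /avoids_powers1 Q1; have [//|QT] := Nmax Q iQ NQ.
by case: Q1; rewrite QT.
Qed.

Lemma ex_maximal_ideal_sup L : is_ideal L -> ~ L 1 ->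
  exists N, maximal_ideal N /\ L `<=` N.
Proof.
move=> iL /avoids_powers1 L1.
have [N [iN LN /avoids_powers1 N1 Nmax]] := ex_maximal_avoiding iL L1.
exists N; split=> //; split=> //; split=> // J iJ NJ.
have [J1|/avoids_powers1 J1] := pselect (J 1); first by right; apply: ideal_eqT.
by left; apply: Nmax.
Qed.

Lemma maximal_ideal_eq M N : maximal_ideal M -> maximal_ideal N -> M `<=` N ->
  N = M.
Proof.
move=> [_ [_ Mmax]] [iN [N1 _]] MN; have [//|NT] := Mmax N iN MN.
by case: N1; rewrite NT.
Qed.

Lemma ideal1_of_not_sub_maximal I : is_ideal I ->
  (forall N, maximal_ideal N -> ~ I `<=` N) -> I 1.
Proof.
move=> iI Imax; apply: contrapT => I1.
by have [N [mN IN]] := ex_maximal_ideal_sup iI I1; apply: (Imax N).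
Qed.

Lemma ex_pow_mem_of_primes I a : is_ideal I ->
  (forall P, prime_ideal P -> I `<=` P -> P a) -> exists k, I (a ^+ k).
Proof.
move=> iI Ia; apply: contrapT => /forallNP aI.
have [P [pP IP aP]] := ex_prime_avoiding iI aI.
by apply: (aP 1%N); rewrite expr1; apply: Ia.
Qed.

Definition colon J x := [set r | J (r * x)].

Lemma colon_ideal J x : is_ideal J -> is_ideal (colon J x).
Proof.
move=> iJ; split; first by rewrite /colon /= mul0r; apply: ideal0.
split=> [r r' Jr Jr'|a r Jr]; rewrite /colon /=.
- by rewrite mulrDl; apply: idealD.
- by rewrite -mulrA; apply: idealMl.
Qed.

Lemma ideal_mem_of_local J x : is_ideal J ->
  (forall N, maximal_ideal N -> exists2 s, ~ N s & J (s * x)) -> J x.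
Proof.
move=> iJ Jloc; rewrite -[x]mul1r; apply: (ideal1_of_not_sub_maximal (colon_ideal x iJ)).
by move=> N /Jloc[s Ns Jsx] /(_ s Jsx).
Qed.

End Ideals.

Section Zariski.
Variable R : idomainType.
Implicit Types (a b x y : R) (A I J P Q : set R) (U K : set (set R)).

Definition Dz I := [set P | prime_ideal P /\ ~ I `<=` P].
Definition Vz I := [set P | prime_ideal P /\ I `<=` P].

Lemma Dz1 a : Dz [set a] = [set P | prime_ideal P /\ ~ P a].
Proof. by apply/seteqP; split=> P; rewrite /Dz /= sub1set in_setE. Qed.

Lemma subset_Vz I J : I `<=` J -> Vz J `<=` Vz I.
Proof. by move=> IJ P [pP JP]; split=> // x /IJ /JP. Qed.

Definition span A := [set x | exists l : seq (R * R),
  (forall p, p \in l -> A p.2) /\ x = \sum_(p <- l) p.1 * p.2].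

Lemma span_ideal A : is_ideal (span A).
Proof.
split; first by exists [::]; rewrite big_nil.
split=> [_ _ [l1 [Al1 ->]] [l2 [Al2 ->]]|r _ [l [Al ->]]].
  exists (l1 ++ l2); rewrite big_cat; split=> // p.
  by rewrite mem_cat => /orP[/Al1|/Al2].
exists [seq (r * p.1, p.2) | p <- l]; split; first by move=> _ /mapP[p /Al Ap ->].
by rewrite big_map mulr_sumr; apply: eq_bigr => p _; rewrite mulrA.
Qed.

Lemma sub_span A : A `<=` span A.
Proof.
move=> y Ay; exists [:: (1, y)]; rewrite big_seq1 mul1r; split=> // p.
by rewrite inE => /eqP ->.
Qed.

Lemma span_sub A I : is_ideal I -> A `<=` I -> span A `<=` I.
Proof.
move=> iI AI _ [l [Al ->]]; rewrite big_seq; apply: (big_ind I) => //.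
- exact: ideal0.
- by move=> x y; apply: idealD.
- by move=> p /Al /AI; apply: idealMl.
Qed.

Lemma Dz1_compact a : zariski_compact (Dz [set a]).
Proof.
move=> C Copen Ccov.
pose G := [set y | exists V I, [/\ C V, V = Dz I & I y]].
have /choice[cover coverP] :
    forall y, exists V, G y -> C V /\ exists2 I, V = Dz I & I y.
  move=> y; have [[V [I [CV VI Iy]]]|nGy] := pselect (G y); last by exists set0 => /nGy.
  by exists V => _; split=> //; exists I.
(* A prime containing [G] but not [a] would lie in a member [Dz I] of [C],
   with [I] inside [G]. *)
have [k [l [lG ak]]] : exists k, span G (a ^+ k).
  apply: ex_pow_mem_of_primes (span_ideal G) _ => P pP GP; apply: contrapT => Pa.
  have [V CV VP] : (\bigcup_(V in C) V) P by apply: Ccov; rewrite Dz1.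
  have [I VI] := Copen V CV; move: VP; rewrite VI => -[_]; apply=> y Iy.
  by apply/GP/sub_span; exists V, I.
exists [seq cover p.2 | p <- l]; split.
  by move=> _ /mapP[p /lG /coverP[CV _] ->].
move=> Q; rewrite Dz1 => -[pQ Qa]; apply: contrapT => Qcover; apply: Qa.
apply: (prime_ideal_pow (k := k)) => //; rewrite ak.
apply: (span_sub pQ.1 (@subset_refl _ Q)).
exists l; split=> // p pl; have [_ [I VI Iy]] := coverP p.2 (lG p pl).
apply: contrapT => Qp; apply: Qcover; exists (cover p.2); first exact: map_f.
by rewrite VI; split=> // /(_ _ Iy).
Qed.

Lemma zariski_compact_bigcup (T : finType) (K : T -> set (set R)) :
  (forall i, zariski_compact (K i)) -> zariski_compact (\bigcup_i K i).
Proof.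
move=> Kc C Copen Ccov.
have /choice[s sP] : forall i, exists s : seq (set (set R)),
    (forall V, V \in s -> C V) /\ K i `<=` \bigcup_(V in [set V | V \in s]) V.
  by move=> i; apply: Kc => // P KiP; apply: Ccov; exists i.
exists (flatten [seq s i | i <- enum T]); split.
  by move=> V /flatten_mapP[i _ /(proj1 (sP i))].
move=> P [i _ /(proj2 (sP i))[V Vs VP]]; exists V => //.
by apply/flatten_mapP; exists i; rewrite ?mem_enum.
Qed.

Definition gen n (a : 'I_n -> R) :=
  [set x | exists c : 'I_n -> R, x = \sum_(i < n) c i * a i].

Lemma gen_ideal n (a : 'I_n -> R) : is_ideal (gen a).
Proof.
split; first by exists (fun=> 0); rewrite big1 // => i _; rewrite mul0r.
split=> [_ _ [c1 ->] [c2 ->]|r _ [c ->]].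
  by exists (fun i => c1 i + c2 i); rewrite -big_split; apply: eq_bigr => i _; rewrite mulrDl.
by exists (fun i => r * c i); rewrite mulr_sumr; apply: eq_bigr => i _; rewrite mulrA.
Qed.

Lemma gen_mem n (a : 'I_n -> R) j : gen a (a j).
Proof.
exists (fun i => (i == j)%:R); rewrite (bigD1 j) //= eqxx mul1r big1 ?addr0 //.
by move=> i /negbTE ->; rewrite mul0r.
Qed.

Lemma gen_nth_mem (g : seq R) b : b \in g -> gen (fun i : 'I_(size g) => g`_i) b.
Proof.
move=> bg; have bi : (index b g < size g)%N by rewrite index_mem.
by have := gen_mem (fun i : 'I_(size g) => g`_i) (Ordinal bi); rewrite /= nth_index.
Qed.

Lemma gen_sub n (a : 'I_n -> R) I : is_ideal I -> (forall i, I (a i)) -> gen a `<=` I.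
Proof.
move=> iI Ia _ [c ->]; apply: (big_ind I) => [|x y|i _]; first exact: ideal0.
  exact: idealD.
exact: idealMl.
Qed.

Lemma Dz_gen n (a : 'I_n -> R) : Dz (gen a) = \bigcup_i Dz [set a i].
Proof.
apply/seteqP; split=> P.
  move=> [pP aP]; have [i Pai] : exists i, ~ P (a i).
    by apply/existsNP => aiP; apply: aP; apply: gen_sub aiP; case: pP.
  by exists i => //; rewrite Dz1.
by move=> [i _]; rewrite Dz1 => -[pP Pai]; split=> // /(_ _ (gen_mem a i)).
Qed.

Lemma Dz_gen_compact n (a : 'I_n -> R) : zariski_compact (Dz (gen a)).
Proof. by rewrite Dz_gen; apply: zariski_compact_bigcup => i; apply: Dz1_compact. Qed.

(* Unions of zero loci of finitely generated ideals: the open sets of the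
   inverse topology. *)
Definition Vfg_open U := U `<=` @Spec R /\
  forall P, U P -> exists s : seq R, [set` s] `<=` P /\ Vz [set` s] `<=` U.

Lemma Vfg_open_topology : is_topology_on_Spec Vfg_open.
Proof.
split; first by split=> // P _; exists [::]; split=> // Q [].
split; first by move=> U [].
split=> [C CV|U U' [USpec UV] [U'Spec U'V]].
  split=> [P [U /CV[USpec _] /USpec] //|P [U CU UP]].
  have [_ /(_ P UP)[s [sP sU]]] := CV U CU.
  by exists s; split=> // Q /sU UQ; exists U.
split=> [P [/USpec] //|P [UP U'P]].
have [s [sP sU]] := UV P UP; have [s' [s'P s'U]] := U'V P U'P.
exists (s ++ s'); split=> [x|Q Qss'].
  by rewrite /= mem_cat => /orP[/sP|/s'P].
split; [apply: sU | apply: s'U]; apply: subset_Vz Qss' => x /=;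
  by rewrite mem_cat => ->; rewrite ?orbT.
Qed.

Lemma Vfg_open_setD_compact K : zariski_open K -> zariski_compact K ->
  Vfg_open (@Spec R `\` K).
Proof.
move=> [I ->] Kc; split=> [P [] //|P [pP nIP]].
pose C := [set Dz [set b] | b in I].
have [sv [svC svcov]] : exists sv : seq (set (set R)), (forall V, V \in sv -> C V) /\
    Dz I `<=` \bigcup_(V in [set V | V \in sv]) V.
  apply: Kc => [_ [b _ <-]|Q [pQ /existsNP[b /not_implyP[Ib Qb]]]]; first by exists [set b].
  by exists (Dz [set b]); [exists b | rewrite Dz1].
have /choice[generator genP] : forall V, exists b, C V -> I b /\ V = Dz [set b].
  by move=> V; have [[b Ib <-]|nCV] := pselect (C V); [exists b | exists 0 => /nCV].
have IP : I `<=` P by apply: contrapT => nIP'; apply: nIP.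
exists [seq generator V | V <- sv]; split=> [_ /mapP[V /svC /genP[Ib _] ->]|Q [pQ sQ]].
  exact: IP.
split=> // -[_ nIQ]; have [V Vsv VQ] := svcov Q (conj pQ nIQ).
move: VQ; have [_ ->] := genP V (svC V Vsv); rewrite Dz1 => -[_]; apply.
by apply: sQ; apply: map_f.
Qed.

Lemma inverse_open_Vfg U : inverse_open U -> Vfg_open U.
Proof. by move=> oU; apply: oU Vfg_open_topology Vfg_open_setD_compact. Qed.

End Zariski.

Section LocalizationDVR.
Variables (R : idomainType) (M : set R) (v : {fraction R} -> int).
Hypotheses (iM : is_ideal M) (M1 : ~ M 1).
Hypothesis vM : forall x y, x != 0 -> y != 0 -> v (x * y) = v x + v y.
Hypothesis vsurj : forall n : int, exists x, x != 0 /\ v x = n.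
Hypothesis localizationE :
  localization M = [set x | x = 0 \/ (x != 0 /\ 0 <= v x)].
Local Notation tf := (@FracField.tofrac R).

Lemma v1 : v 1 = 0.
Proof.
have := vM (oner_neq0 {fraction R}) (oner_neq0 _); rewrite mulr1 => e.
by apply: (@addrI _ (v 1)); rewrite -e addr0.
Qed.

Lemma vV z : z != 0 -> v z^-1 = - v z.
Proof.
move=> z0; have := vM z0 (invr_neq0 z0); rewrite mulfV // v1 => /esym/eqP.
by rewrite addr_eq0 => /eqP ->; rewrite opprK.
Qed.

Lemma localization_v z : z != 0 -> localization M z <-> 0 <= v z.
Proof.
move=> z0; rewrite localizationE /=; split=> [[z0'|[]//]|]; last by right.
by move: z0; rewrite z0' eqxx.
Qed.

Lemma not_M_neq0 s : ~ M s -> s != 0.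
Proof. by apply: contra_notN => /eqP ->; apply: ideal0. Qed.

Lemma v_tofrac_ge0 x : x != 0 -> 0 <= v (tf x).
Proof.
move=> x0; apply/localization_v; first by rewrite tofrac_eq0.
by exists x, 1; rewrite tofrac1 divr1.
Qed.

Lemma v_tofrac_unit s : ~ M s -> v (tf s) = 0.
Proof.
move=> Ms; have s0 : tf s != 0 by rewrite tofrac_eq0 not_M_neq0.
apply/eqP; rewrite eq_le v_tofrac_ge0 ?not_M_neq0 // andbT -oppr_ge0 -vV //.
by apply/localization_v; [rewrite invr_eq0 | exists 1, s; rewrite tofrac1 div1r].
Qed.

Lemma v_tofrac_gt0 x : M x -> x != 0 -> 0 < v (tf x).
Proof.
move=> Mx x0; have tfx0 : tf x != 0 by rewrite tofrac_eq0.
rewrite lt_def v_tofrac_ge0 // andbT; apply/eqP => vx0.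
have [b [s [Ms e]]] : localization M (tf x)^-1.
  by apply/localization_v; rewrite ?invr_eq0 // vV // vx0 oppr0.
have tfs0 : tf s != 0 by rewrite tofrac_eq0 not_M_neq0.
apply: Ms; suff -> : s = b * x by apply: idealMl.
apply/eqP; rewrite -tofrac_eq tofracM; move/eqP: e.
by rewrite -(div1r (tf x)) eqr_div // mul1r.
Qed.

Lemma ex_uniformizer : exists t, [/\ M t, t != 0 & v (tf t) = 1].
Proof.
have [z [z0 vz]] := vsurj 1.
have [a [s [Ms ez]]] : localization M z by apply/localization_v; rewrite ?vz.
have tfs0 : tf s != 0 by rewrite tofrac_eq0 not_M_neq0.
have ea : tf a = z * tf s by rewrite ez mulfVK.
have a0 : a != 0 by rewrite -tofrac_eq0 ea mulf_neq0.
have va : v (tf a) = 1 by rewrite ea vM // vz v_tofrac_unit // addr0.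
by exists a; split=> //; apply: contrapT => /v_tofrac_unit; rewrite va.
Qed.

(* [M R_M = t R_M]: every [x] in [M] is [t] times the element [b / s] of [R_M]. *)
Lemma uniformizer_generates : exists t, M t /\
  forall x, M x -> exists s b, ~ M s /\ s * x = b * t.
Proof.
have [t [Mt t0 vt]] := ex_uniformizer; exists t; split=> // x Mx.
have [->|x0] := eqVneq x 0; first by exists 1, 0; rewrite mulr0 mul0r.
have [tfx0 tft0] : tf x != 0 /\ tf t != 0 by rewrite !tofrac_eq0.
have [b [s [Ms e]]] : localization M (tf x / tf t).
  apply/localization_v; first by rewrite mulf_neq0 ?invr_eq0.
  rewrite vM ?invr_eq0 // vV // vt subr_ge0.
  by have := v_tofrac_gt0 Mx x0; lia.
have tfs0 : tf s != 0 by rewrite tofrac_eq0 not_M_neq0.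
exists s, b; split=> //; apply/eqP; rewrite -tofrac_eq !tofracM; move/eqP: e.
by rewrite eqr_div // mulrC.
Qed.

End LocalizationDVR.

Lemma DVR_localization_principal (R : idomainType) (M : set R) :
  is_ideal M -> ~ M 1 -> is_DVR (localization M) ->
  exists t, M t /\ forall x, M x -> exists s b, ~ M s /\ s * x = b * t.
Proof. by move=> iM M1 [v [vM [_ [vsurj locE]]]]; apply: uniformizer_generates locE. Qed.

Lemma finitely_generated_of_isolated (R : idomainType) (M : set R) :
  maximal_ideal M -> is_DVR (localization M) ->
  isolated_in_inverse_Max M -> finitely_generated M.
Proof.
move=> mM MDVR [U [/inverse_open_Vfg[_ UVfg] UM]]; have [iM [M1 _]] := mM.
have [UMM _] : (U `&` @MaxSpec R) M by rewrite UM.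
have [s [sM sU]] := UVfg M UMM.
have only_M N : maximal_ideal N -> [set` s] `<=` N -> N = M.
  move=> mN sN; suff : (U `&` @MaxSpec R) N by rewrite UM.
  by split=> //; apply: sU; split=> //; apply: maximal_ideal_prime.
have [t [Mt tM]] := DVR_localization_principal iM M1 MDVR.
pose g := t :: s; have iJ := gen_ideal (fun i : 'I_(size g) => g`_i).
exists (size g), (fun i => g`_i); apply/seteqP; split; last first.
  apply: gen_sub => // i; have := mem_nth 0 (ltn_ord i).
  by rewrite inE => /orP[/eqP ->|/sM].
(* [M] and [(t, s)] agree locally: at [M] because [t] generates [M R_M],
   elsewhere because [s] is not contained in [N]. *)
move=> x Mx; apply: (ideal_mem_of_local iJ) => N mN.
have [->|NM] := pselect (N = M).
  have [u [b [Mu e]]] := tM x Mx; exists u => //; rewrite e.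
  by apply: idealMl iJ _; apply: gen_nth_mem; rewrite mem_head.
have [b bs Nb] : exists2 b, b \in s & ~ N b.
  apply: contrapT => /forall2NP sN; apply/NM/only_M => // b /= bs.
  by have [|/contrapT] := sN b.
exists b => //; rewrite mulrC; apply: idealMl iJ _.
by apply: gen_nth_mem; rewrite in_cons bs orbT.
Qed.

Lemma isolated_of_finitely_generated (R : idomainType) (M : set R) :
  maximal_ideal M -> finitely_generated M -> isolated_in_inverse_Max M.
Proof.
move=> mM [n [a Ma]]; exists (@Spec R `\` Dz M); split.
  move=> T _; apply; first by exists M.
  by have -> : M = gen a by []; apply: Dz_gen_compact.
apply/seteqP; split=> [N [[_ nDN] mN]|_ ->].
  apply: (maximal_ideal_eq mM mN); apply: contrapT => MN; apply: nDN.
  by split=> //; apply: maximal_ideal_prime.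
by split=> //; split=> [|[_ []//]]; apply: maximal_ideal_prime.
Qed.

Theorem proposition2p3 (R : idomainType) (M : set R) :
  almost_Dedekind R -> maximal_ideal M ->
  (isolated_in_inverse_Max M <-> finitely_generated M).
Proof.
move=> aD mM; split; first exact: finitely_generated_of_isolated (aD M mM).
exact: isolated_of_finitely_generated.
Qed.
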